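(* Let $\Delta_1$ and $\Delta_2$ be simplicial complexes on disjoint vertex sets. Then $\Delta_1$ and $\Delta_2$ are both $k$-shellable if and only if the join $\Delta_1\cdot\Delta_2$ is $k$-shellable.
   Context: The join is $\Delta_1\cdot\Delta_2=\{\sigma\cup\tau:\sigma\in\Delta_1,\tau\in\Delta_2\}$. $\langle F_1,\ldots,F_s\rangle$ denotes the simplicial complex with facets $F_1,\dots,F_s$. A simplicial complex $\Gamma$ of dimension $d$ is $k$-shellable ($1\le k\le d+1$) if its facets can be ordered $F_1,\ldots,F_r$ such that for every $j=2,\ldots,r$, $\Gamma_j=\langle F_j\rangle\cap\langle F_1,\ldots,F_{j-1}\rangle$ satisfies (i) $\Gamma_j$ is generated by a nonempty set of faces of $\langle F_j\rangle$ of dimension $|F_j|-k-1$; (ii) if $\Gamma_j$ has more than one facet, then for every two distinct facets $\sigma,\tau$ of $\Gamma_j$, $F_j\subseteq\sigma\cup\tau$.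
   Formalization: The equivalence holds only for k ≤ dim Δ₁ + 1 and k ≤ dim Δ₂ + 1, that is, for k in the admissible range of both Δ₁ and Δ₂. The statement above fails without it. *)

From mathcomp Require Import all_boot.
Set Implicit Arguments. Unset Strict Implicit. Unset Printing Implicit Defensive.

Section Complexes.
Variable T : finType.

Definition is_complex (D : {set {set T}}) : bool :=
  (set0 \in D) && [forall F in D, forall G : {set T}, (G \subset F) ==> (G \in D)].

Definition gen (S : {set {set T}}) : {set {set T}} :=
  [set s : {set T} | [exists F in S, s \subset F]].

Definition facets (D : {set {set T}}) : {set {set T}} :=
  [set F in D | [forall G in D, (F \subset G) ==> (G == F)]].

Definition vertices (D : {set {set T}}) : {set T} := \bigcup_(F in D) F.

(* dim D + 1 = maximal cardinality of a face *)
Definition dimp1 (D : {set {set T}}) : nat := \max_(F in D) #|F|.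

Definition join (D1 D2 : {set {set T}}) : {set {set T}} :=
  [set s :|: t | s in D1, t in D2].

(* Condition for step j (0-based index j >= 1) of the facet ordering Fs:
   Gamma_j = <F_j> /\ <F_1,...,F_{j-1}> satisfies (i) and (ii). *)
Definition shelling_step (k : nat) (Fs : seq {set T}) (j : nat) : Prop :=
  let Fj := nth set0 Fs j in
  let Gam := gen [set Fj] :&: gen [set F in take j Fs] in
  (* (i): generated by a nonempty set of faces of <F_j> of dimension
          |F_j| - k - 1, i.e. of cardinality |F_j| - k *)
  (exists G : {set {set T}},
      [/\ G != set0,
          forall s, s \in G -> (s \subset Fj) /\ #|s| + k = #|Fj|
        & Gam = gen G]) /\
  (1 < #|facets Gam| ->
     forall s t, s \in facets Gam -> t \in facets Gam -> s != t ->
       Fj \subset s :|: t).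

Definition k_shellable (k : nat) (D : {set {set T}}) : Prop :=
  (1 <= k <= dimp1 D) /\
  exists Fs : seq {set T},
    [/\ uniq Fs, [set F in Fs] = facets D &
        forall j, 0 < j < size Fs -> shelling_step k Fs j].

End Complexes.

From mathcomp Require Import all_boot.
Set Implicit Arguments. Unset Strict Implicit. Unset Printing Implicit Defensive.

(* Order the facets of the join lexicographically, F_i :|: G_j by (i, j).  The
   part of F :|: G already covered is then Gam1 * <G> :|: <F> * Gam2, where
   Gam1 and Gam2 are the parts of F and G covered in the orderings of D1 and
   D2; it is generated by the faces s :|: G and F :|: t for generators s of
   Gam1 and t of Gam2, and these inherit conditions (i) and (ii).  Conversely,
   for a facet G0 of D2 the facets F :|: G0 of the join occur in a shelling in
   some order, and taking the link of G0 (generators s :\: G0 with G0 \subset s)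
   turns this order into a k-shelling of D1. *)

Lemma cat_eq_cat_cons (S : Type) (a b s1 s2 : seq S) x : a ++ b = s1 ++ x :: s2 ->
  (exists a2, a = s1 ++ x :: a2) \/ (exists b1, s1 = a ++ b1 /\ b = b1 ++ x :: s2).
Proof.
elim: a s1 => [|y a IH] s1 /=; first by move=> ->; right; exists s1.
case: s1 => [|z s1] /= [<-]; first by move=> _; left; exists a.
by case/IH => [[a2 ->]|[b1 [-> ->]]]; [left; exists a2 | right; exists b1].
Qed.

Lemma map_eq_cat_cons (S R : Type) (f : S -> R) s r1 z r2 : map f s = r1 ++ z :: r2 ->
  exists s1 x s2, [/\ s = s1 ++ x :: s2, r1 = map f s1 & z = f x].
Proof.
elim: s r1 => [|y s IH] [|w r1] //= [e1 e2]; first by exists [::], y, s.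
have [s1 [x [s2 [-> -> ->]]]] := IH _ e2.
by exists (y :: s1), x, s2; rewrite /= e1.
Qed.

Lemma filter_eq_cat_cons (S : Type) (p : pred S) s r1 x r2 : filter p s = r1 ++ x :: r2 ->
  exists s1 s2, [/\ s = s1 ++ x :: s2, r1 = filter p s1 & p x].
Proof.
elim: s r1 => [|y s IH] r1 /=; first by case: r1.
case: ifP => py; last by case/IH=> s1 [s2 [-> -> px]]; exists (y :: s1), s2; rewrite /= py.
case: r1 => [|w r1] /= [<-]; first by move=> _; exists [::], s.
by case/IH=> s1 [s2 [-> -> px]]; exists (y :: s1), s2; rewrite /= py.
Qed.

Lemma allpairs_eq_cat_cons (S U R : Type) (f : S -> U -> R) s t r1 z r2 :
  [seq f x y | x <- s, y <- t] = r1 ++ z :: r2 ->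
  exists s1 x s2 t1 y t2, [/\ s = s1 ++ x :: s2, t = t1 ++ y :: t2, z = f x y &
    r1 = [seq f x' y' | x' <- s1, y' <- t] ++ [seq f x y' | y' <- t1]].
Proof.
elim: s r1 => [|x s IH] r1; first by case: r1.
rewrite allpairs_cons => /(@cat_eq_cat_cons R) [[r' e]|[b1 [-> e]]].
  have [t1 [y [t2 [-> -> ->]]]] := map_eq_cat_cons e.
  by exists [::], x, s, t1, y, t2.
have [s1 [x' [s2 [t1 [y [t2 [-> -> -> ->]]]]]]] := IH _ e.
by exists (x :: s1), x', s2, t1, y, t2; rewrite allpairs_cons catA.
Qed.

Section DisjointSplit.
Variables (T : finType) (V1 V2 : {set T}).
Hypothesis V12 : [disjoint V1 & V2].
Implicit Types A B x : {set T}.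

Lemma setU_cap1 A B : A \subset V1 -> B \subset V2 -> (A :|: B) :&: V1 = A.
Proof.
move=> AV BV; rewrite setIUl (setIidPl AV).
by rewrite (disjoint_setI0 (disjointWl BV _)) ?setU0 // disjoint_sym.
Qed.

Lemma setU_cap2 A B : A \subset V1 -> B \subset V2 -> (A :|: B) :&: V2 = B.
Proof.
by move=> AV BV; rewrite setIUl (setIidPl BV) (disjoint_setI0 (disjointWl AV _)) ?set0U.
Qed.

Lemma subset_setU_split x A B : x \subset V1 :|: V2 -> A \subset V1 -> B \subset V2 ->
  (x \subset A :|: B) = (x :&: V1 \subset A) && (x :&: V2 \subset B).
Proof.
move=> xV AV BV; apply/idP/andP => [xAB | [xA xB]].
  by split; [rewrite -(setU_cap1 AV BV) | rewrite -(setU_cap2 AV BV)]; apply: setSI.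
by rewrite -(setIidPl xV) setIUr setUSS.
Qed.

Lemma subset_setU2 A B A' B' :
  A \subset V1 -> B \subset V2 -> A' \subset V1 -> B' \subset V2 ->
  (A :|: B \subset A' :|: B') = (A \subset A') && (B \subset B').
Proof.
by move=> AV BV A'V B'V; rewrite subset_setU_split ?setUSS ?setU_cap1 ?setU_cap2.
Qed.

Lemma eq_setU2 A B A' B' :
  A \subset V1 -> B \subset V2 -> A' \subset V1 -> B' \subset V2 ->
  (A :|: B == A' :|: B') = (A == A') && (B == B').
Proof. by move=> AV BV A'V B'V; rewrite !eqEsubset !subset_setU2 // andbACA. Qed.

End DisjointSplit.

Lemma cardsU_disjoint (T : finType) (A B : {set T}) :
  [disjoint A & B] -> #|A :|: B| = #|A| + #|B|.
Proof. by move=> AB; rewrite cardsU disjoint_setI0 // cards0 subn0. Qed.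

Section Generated.
Variable T : finType.
Implicit Types (F G x : {set T}) (S : {set {set T}}).

Lemma genP S x : reflect (exists2 F, F \in S & x \subset F) (x \in gen S).
Proof.
rewrite inE; apply: (iffP existsP) => [[F /andP[]] | [F FS xF]]; first by exists F.
by exists F; rewrite FS.
Qed.

Lemma gen1 F x : (x \in gen [set F]) = (x \subset F).
Proof. by apply/genP/idP => [[G /set1P -> //] | xF]; exists F; rewrite ?set11. Qed.

Lemma gen_seq (Fs : seq {set T}) x :
  (x \in gen [set F in Fs]) = has (fun F => x \subset F) Fs.
Proof. by apply/genP/hasP => -[F FFs xF]; exists F; rewrite ?inE in FFs *. Qed.

Lemma facetP S F :
  reflect (F \in S /\ forall G, G \in S -> F \subset G -> G = F) (F \in facets S).
Proof.
rewrite inE; apply: (iffP andP) => -[FS maxF]; split => //.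
  by move=> G GS FG; apply/eqP; move/forall_inP: maxF => /(_ G GS); rewrite FG.
by apply/forall_inP => G GS; apply/implyP => /(maxF G GS) ->.
Qed.

Lemma exists_facet S s : s \in S -> exists F, F \in facets S.
Proof.
move=> sS; have [F FS maxF] := @arg_maxnP _ s (mem S) (fun F => #|F|) sS.
exists F; apply/facetP; split=> // G GS FG.
by apply/eqP; rewrite eq_sym eqEcard FG; exact: maxF.
Qed.

Lemma facets_gen_pure S c : (forall s, s \in S -> #|s| = c) -> facets (gen S) = S.
Proof.
move=> pureS; apply/setP => s; apply/facetP/idP => [[/genP[F FS sF] maxs] | sS].
  by rewrite -(maxs F) //; apply/genP; exists F.
split=> [|G /genP[F FS GF] sG]; first by apply/genP; exists s.
apply/eqP; rewrite eq_sym eqEcard sG (pureS s sS) -(pureS F FS).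
exact: subset_leq_card.
Qed.

(* Conditions (i) and (ii) of a shelling step, except that the generating set
   may be empty: this makes the first facet of every ordering admissible. *)
Definition admissible k F (Gam : {set {set T}}) : Prop :=
  exists Gen : {set {set T}},
    [/\ forall s, s \in Gen -> s \subset F /\ #|s| + k = #|F|,
        Gam = gen Gen &
        forall s t, s \in Gen -> t \in Gen -> s != t -> F \subset s :|: t].

Lemma shelling_stepE k Fs j : 0 < j < size Fs ->
  let F := nth set0 Fs j in
  shelling_step k Fs j <-> admissible k F (gen [set F] :&: gen [set G in take j Fs]).
Proof.
move=> /andP[j0 jFs] F; rewrite /shelling_step -/F.
set Gam := _ :&: _.
have pure (Gen : {set {set T}}) : (forall s, s \in Gen -> s \subset F /\ #|s| + k = #|F|) ->
    facets (gen Gen) = Gen.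
  by move=> HGen; apply: (facets_gen_pure (c := #|F| - k)) => s /HGen[_ <-]; rewrite addnK.
split=> [[[Gen [_ HGen EGam]] cover] | [Gen [HGen EGam cover]]].
  exists Gen; split=> // s t sGen tGen st; apply: cover; rewrite ?EGam ?pure //.
  by apply/card_gt1P; exists s, t.
have Gam0 : set0 \in Gam.
  rewrite inE gen1 sub0set gen_seq (eq_has (fun G => sub0set G)) has_predT.
  by rewrite size_takel // ltnW.
split; last by rewrite EGam pure // => _; apply: cover.
exists Gen; split=> //; apply/set0Pn.
by move: Gam0; rewrite EGam => /genP[s sGen _]; exists s.
Qed.

Lemma admissible_join k F G Gam1 Gam2 : [disjoint F & G] ->
  admissible k F Gam1 -> admissible k G Gam2 ->
  admissible k (F :|: G)
    [set x : {set T} | (x \subset F :|: G) && ((x :&: F \in Gam1) || (x :&: G \in Gam2))].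
Proof.
move=> FG [Gen1 [HGen1 -> cover1]] [Gen2 [HGen2 -> cover2]].
exists ([set s :|: G | s in Gen1] :|: [set F :|: t | t in Gen2]); split.
- move=> _ /setUP[/imsetP[s /HGen1[sF cs] ->] | /imsetP[t /HGen2[tG ct] ->]].
    rewrite setSU // !cardsU_disjoint ?(disjointWl sF) //.
    by split=> //; rewrite addnAC cs.
  rewrite setUS // !cardsU_disjoint ?(disjointWr tG) //.
  by split=> //; rewrite -addnA ct.
- apply/setP => x; rewrite in_set.
  apply/andP/genP => [[xFG /orP[/genP[s sGen xs] | /genP[t tGen xt]]] | [u]].
  + exists (s :|: G); first by apply/setUP; left; apply: imset_f.
    have [sF _] := HGen1 s sGen.
    by rewrite (subset_setU_split FG xFG sF (subxx G)) xs subsetIr.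
  + exists (F :|: t); first by apply/setUP; right; apply: imset_f.
    have [tG _] := HGen2 t tGen.
    by rewrite (subset_setU_split FG xFG (subxx F) tG) xt subsetIr.
  + case/setUP=> [/imsetP[s sGen ->] | /imsetP[t tGen ->]] xu.
    * have [sF _] := HGen1 s sGen.
      have xFG : x \subset F :|: G by rewrite (subset_trans xu) ?setSU.
      move: xu; rewrite (subset_setU_split FG xFG sF (subxx G)) => /andP[xs _].
      by split=> //; apply/orP; left; apply/genP; exists s.
    * have [tG _] := HGen2 t tGen.
      have xFG : x \subset F :|: G by rewrite (subset_trans xu) ?setUS.
      move: xu; rewrite (subset_setU_split FG xFG (subxx F) tG) => /andP[_ xt].
      by split=> //; apply/orP; right; apply/genP; exists t.
- move=> _ _ /setUP[/imsetP[s sGen ->] | /imsetP[t tGen ->]]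
             /setUP[/imsetP[s' sGen' ->] | /imsetP[t' tGen' ->]] ne.
  + rewrite setUACA setUid setSU // cover1 //.
    by apply: contraNneq ne => ->.
  + by rewrite setUACA setUSS ?subsetUl ?subsetUr.
  + by rewrite setUACA setUSS ?subsetUl ?subsetUr.
  + rewrite setUACA setUid setUS // cover2 //.
    by apply: contraNneq ne => ->.
Qed.

Lemma admissible_link k F G Gam : [disjoint F & G] ->
  admissible k (F :|: G) Gam ->
  admissible k F [set x : {set T} | (x \subset F) && (x :|: G \in Gam)].
Proof.
move=> FG [Gen [HGen -> cover]].
exists [set s :&: F | s in Gen & G \subset s]; split.
- move=> _ /imsetP[s /setIdP[sGen Gs] ->]; split; first exact: subsetIr.
  have [sFG cs] := HGen s sGen.
  have es : s = (s :&: F) :|: G.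
    by rewrite -{1}(setIidPl sFG) setIUr (setIidPr Gs).
  move: cs; rewrite {1}es !cardsU_disjoint ?(disjointWl (subsetIr s F)) //.
  by rewrite addnAC => /addIn.
- apply/setP => x; rewrite in_set; apply/andP/genP => [[xF /genP[s sGen xGs]] | [u]].
    exists (s :&: F); last by rewrite subsetI xF (subset_trans _ xGs) ?subsetUl.
    by apply/imset_f/setIdP; rewrite sGen (subset_trans _ xGs) ?subsetUr.
  case/imsetP=> s /setIdP[sGen Gs] -> /subsetIP[xs xF].
  by split=> //; apply/genP; exists s; rewrite // subUset xs.
- move=> _ _ /imsetP[s /setIdP[sGen _] ->] /imsetP[t /setIdP[tGen _] ->] ne.
  rewrite -setIUl subsetI subxx andbT (subset_trans _ (cover s t sGen tGen _)) ?subsetUl //.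
  by apply: contraNneq ne => ->.
Qed.

Definition admissible_order k (Fs : seq {set T}) : Prop :=
  forall s1 F s2, Fs = s1 ++ F :: s2 ->
    admissible k F (gen [set F] :&: gen [set G in s1]).

Lemma admissible_orderP k Fs :
  (forall j, 0 < j < size Fs -> shelling_step k Fs j) <-> admissible_order k Fs.
Proof.
split=> [steps [|G s1] F s2 eFs | adm j /andP[j0 jFs]].
- exists set0; split=> [s | | s t]; rewrite ?inE //.
  by apply/setP => x; rewrite in_setI !gen_seq andbF.
- have j0 : 0 < size (G :: s1) < size Fs by rewrite eFs size_cat /= addnS ltnS leq_addr.
  move/(shelling_stepE k j0): (steps _ j0).
  by rewrite eFs nth_cat ltnn subnn take_size_cat.
- apply/shelling_stepE; first by rewrite j0.
  by apply: (adm _ _ (drop j.+1 Fs)); rewrite -drop_nth // cat_take_drop.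
Qed.

Definition shelling_order k (D : {set {set T}}) (Fs : seq {set T}) : Prop :=
  [/\ uniq Fs, [set F in Fs] = facets D &
      forall j, 0 < j < size Fs -> shelling_step k Fs j].

End Generated.

Section Join.
Variables (T : finType) (V1 V2 : {set T}).
Hypothesis V12 : [disjoint V1 & V2].
Implicit Types (F G H x : {set T}) (Fs Gs Hs : seq {set T}).

Lemma admissible_order_allpairs k Fs Gs :
  (forall F, F \in Fs -> F \subset V1) -> (forall G, G \in Gs -> G \subset V2) ->
  admissible_order k Fs -> admissible_order k Gs ->
  admissible_order k [seq F :|: G | F <- Fs, G <- Gs].
Proof.
move=> FsV GsV adm1 adm2 r1 z r2 e.
have [f1 [F [f2 [g1 [G [g2 [eFs eGs -> ->]]]]]]] := allpairs_eq_cat_cons e.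
have inFs : F \in Fs by rewrite eFs mem_cat mem_head orbT.
have inGs : G \in Gs by rewrite eGs mem_cat mem_head orbT.
have [FV GV] := (FsV F inFs, GsV G inGs).
have := admissible_join (disjointWr GV (disjointWl FV V12)) (adm1 _ _ _ eFs) (adm2 _ _ _ eGs).
congr admissible; apply/setP => x; rewrite in_set !in_setI !gen1 !gen_seq has_cat.
case xFG: (x \subset F :|: G) => //=; rewrite !subsetIr /=.
have xV : x \subset V1 :|: V2 by rewrite (subset_trans xFG) ?setUSS.
have xV1 : x :&: V1 = x :&: F by rewrite -{1}(setIidPl xFG) -setIA (setU_cap1 V12).
have xV2 : x :&: V2 = x :&: G by rewrite -{1}(setIidPl xFG) -setIA (setU_cap2 V12).
congr orb.
- apply/hasP/hasP => [[F' F'f1 xF'] | [_ /allpairsP[[F' G'] [/= F'f1 G'Gs ->]]]];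
    have F'V : F' \subset V1 by rewrite FsV // eFs mem_cat F'f1.
  + exists (F' :|: G); first exact: allpairs_f.
    by rewrite (subset_setU_split V12) // xV1 xV2 xF' subsetIr.
  + rewrite (subset_setU_split V12) ?GsV // xV1 => /andP[xF' _].
    by exists F'.
- rewrite has_map; apply: eq_in_has => G' G'g1 /=.
  have G'V : G' \subset V2 by rewrite GsV // eGs mem_cat G'g1.
  by rewrite (subset_setU_split V12) // xV1 xV2 subsetIr.
Qed.

Lemma admissible_order_slice k G0 Hs :
  (forall H, H \in Hs -> H \subset V1 :|: V2 /\ (G0 \subset H -> H :&: V2 = G0)) ->
  admissible_order k Hs ->
  admissible_order k [seq H :&: V1 | H <- Hs & H :&: V2 == G0].
Proof.
move=> HsV adm r1 z r2 e.
have [u1 [H [u2 [{}e -> ->]]]] := map_eq_cat_cons e.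
have [h1 [h2 [eHs -> /eqP HG0]]] := filter_eq_cat_cons e.
have inHs : H \in Hs by rewrite eHs mem_cat mem_head orbT.
have [HV _] := HsV H inHs.
have eH : H = (H :&: V1) :|: G0 by rewrite -HG0 -setIUr (setIidPl HV).
have HG0d : [disjoint H :&: V1 & G0].
  by rewrite -HG0 (disjointWl (subsetIr _ _)) // (disjointWr (subsetIr _ _)).
move: (adm _ _ _ eHs); rewrite {1 2}eH => /(admissible_link HG0d).
congr admissible; apply/setP => x; rewrite in_set !in_setI !gen1 !gen_seq.
case xH: (x \subset H :&: V1) => //=.
have xV1 : x \subset V1 := subset_trans xH (subsetIr H V1).
rewrite setSU // [RHS]has_map [RHS]has_filter -filter_predI -has_filter.
apply: eq_in_has => H' H'h1 /=.
have inHs' : H' \in Hs by rewrite eHs mem_cat H'h1.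
have [_ maxH'] := HsV H' inHs'.
have G0H' : (G0 \subset H') = (H' :&: V2 == G0).
  by apply/idP/eqP => [/maxH' // | <-]; apply: subsetIl.
by rewrite subUset subsetI xV1 andbT G0H'.
Qed.

Section JoinFacets.
Variables D1 D2 : {set {set T}}.
Hypothesis D1V : forall F, F \in D1 -> F \subset V1.
Hypothesis D2V : forall G, G \in D2 -> G \subset V2.

Lemma facets_join : facets (join D1 D2) = join (facets D1) (facets D2).
Proof.
apply/setP => H; apply/facetP/imset2P.
  case=> /imset2P[s t sD1 tD2 ->] maxH; have [sV tV] := (D1V sD1, D2V tD2).
  exists s t => //; apply/facetP; split=> // u uD su.
    have /eqP := maxH (u :|: t) (imset2_f _ uD tD2) (setSU t su).
    by rewrite (eq_setU2 V12 (D1V uD) tV sV tV) => /andP[/eqP].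
  have /eqP := maxH (s :|: u) (imset2_f _ sD1 uD) (setUS s su).
  by rewrite (eq_setU2 V12 sV (D2V uD) sV tV) => /andP[_ /eqP].
case=> s t /facetP[sD1 maxs] /facetP[tD2 maxt] ->.
split=> [|_ /imset2P[u w uD1 wD2 ->]]; first exact: imset2_f.
rewrite (subset_setU2 V12 (D1V sD1) (D2V tD2) (D1V uD1) (D2V wD2)) => /andP[su tw].
by rewrite (maxs u uD1 su) (maxt w wD2 tw).
Qed.

Lemma facet_subV1 F : F \in facets D1 -> F \subset V1.
Proof. by case/facetP=> /D1V. Qed.

Lemma facet_subV2 G : G \in facets D2 -> G \subset V2.
Proof. by case/facetP=> /D2V. Qed.

Lemma shelling_order_join k Fs Gs :
  shelling_order k D1 Fs -> shelling_order k D2 Gs ->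
  shelling_order k (join D1 D2) [seq F :|: G | F <- Fs, G <- Gs].
Proof.
move=> [uFs eFs /admissible_orderP adm1] [uGs eGs /admissible_orderP adm2].
have FsV F : F \in Fs -> F \subset V1.
  by move=> FFs; apply: facet_subV1; rewrite -eFs inE.
have GsV G : G \in Gs -> G \subset V2.
  by move=> GGs; apply: facet_subV2; rewrite -eGs inE.
split.
- rewrite allpairs_uniq // => -[F G] [F' G'].
  move=> /allpairsP[[? ?] [/= FFs GGs [-> ->]]].
  move=> /allpairsP[[? ?] [/= F'Fs G'Gs [-> ->]]] /eqP.
  rewrite (eq_setU2 V12 (FsV _ FFs) (GsV _ GGs) (FsV _ F'Fs) (GsV _ G'Gs)).
  by case/andP=> /eqP-> /eqP->.
- rewrite facets_join -eFs -eGs; apply/setP => H; rewrite [LHS]in_set.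
  apply/allpairsP/imset2P => [[[F G] [/= FFs GGs ->]] | [F G FFs GGs ->]].
    by exists F G; rewrite ?inE.
  by rewrite !inE in FFs GGs; exists (F, G); split.
- exact/admissible_orderP/admissible_order_allpairs.
Qed.

Lemma shelling_order_slice k G0 Hs : G0 \in facets D2 ->
  shelling_order k (join D1 D2) Hs ->
  shelling_order k D1 [seq H :&: V1 | H <- Hs & H :&: V2 == G0].
Proof.
move=> G0f [uHs eHs /admissible_orderP adm].
have /facetP[G0D2 maxG0] := G0f.
have memHs H : (H \in Hs) = (H \in join (facets D1) (facets D2)).
  by rewrite -facets_join -eHs inE.
have HsV H : H \in Hs -> H \subset V1 :|: V2 /\ (G0 \subset H -> H :&: V2 = G0).
  rewrite memHs => /imset2P[F G /facet_subV1 FV GD2 ->]; have GV := facet_subV2 GD2.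
  split=> [|G0FG]; first exact: setUSS.
  rewrite (setU_cap2 V12) //; apply: maxG0; first by case/facetP: GD2.
  by rewrite -(setU_cap2 V12 FV GV) -(setIidPl (D2V G0D2)) setSI.
split.
- rewrite map_inj_in_uniq ?filter_uniq // => H H'.
  rewrite !mem_filter => /andP[/eqP HG0 /HsV[HV _]] /andP[/eqP H'G0 /HsV[H'V _]] e.
  by rewrite -(setIidPl HV) -(setIidPl H'V) !setIUr HG0 H'G0 e.
- apply/setP => F; rewrite inE; apply/mapP/idP => [[H] | FD1].
    rewrite mem_filter memHs => /andP[_ /imset2P[F' G F'f Gf ->]] ->.
    by rewrite (setU_cap1 V12 (facet_subV1 F'f) (facet_subV2 Gf)).
  have [FV G0V] := (facet_subV1 FD1, facet_subV2 G0f).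
  exists (F :|: G0); last by rewrite (setU_cap1 V12).
  by rewrite mem_filter (setU_cap2 V12) // eqxx memHs imset2_f.
- exact/admissible_orderP/admissible_order_slice.
Qed.

End JoinFacets.

End Join.

Lemma face_sub_vertices (T : finType) (D : {set {set T}}) F : F \in D -> F \subset vertices D.
Proof. exact: bigcup_sup. Qed.

Lemma join_comm (T : finType) (D1 D2 : {set {set T}}) : join D1 D2 = join D2 D1.
Proof.
apply/setP => H; apply/imset2P/imset2P => -[s t sD tD ->];
  by exists t s => //; rewrite setUC.
Qed.

Lemma dimp1_join (T : finType) (D1 D2 : {set {set T}}) : set0 \in D2 ->
  dimp1 D1 <= dimp1 (join D1 D2).
Proof.
move=> D20; apply/bigmax_leqP => F FD1.
have FJ : F \in join D1 D2 by rewrite -[F]setU0; apply: imset2_f.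
exact: leq_bigmax_cond.
Qed.

Theorem theorem2p7 (T : finType) (D1 D2 : {set {set T}}) (k : nat) :
  is_complex D1 -> is_complex D2 ->
  [disjoint vertices D1 & vertices D2] ->
  k <= dimp1 D1 -> k <= dimp1 D2 ->
  (k_shellable k D1 /\ k_shellable k D2 <-> k_shellable k (join D1 D2)).
Proof.
move=> /andP[D10 _] /andP[D20 _] V12 k1 k2.
have V21 : [disjoint vertices D2 & vertices D1] by rewrite disjoint_sym.
have [D1V D2V] := (@face_sub_vertices T D1, @face_sub_vertices T D2).
split=> [[[/andP[k0 _] [Fs sh1]] [_ [Gs sh2]]] | [/andP[k0 _] [Hs shJ]]].
  split; first by rewrite k0 (leq_trans k1) ?dimp1_join.
  exact: ex_intro _ _ (shelling_order_join V12 D1V D2V sh1 sh2).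
have [[G0 G0f] [F0 F0f]] := (exists_facet D20, exists_facet D10).
split; split; rewrite ?k0 //.
  exact: ex_intro _ _ (shelling_order_slice V12 D1V D2V G0f shJ).
rewrite join_comm in shJ.
exact: ex_intro _ _ (shelling_order_slice V21 D2V D1V F0f shJ).
Qed.
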